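(* Let $\mathcal{H}$ be a finite hypothesis class of maps $\mathcal{X}\times\{-1,1\}\to\{-1,1\}$ containing the constant classifiers, let $\mathcal{D}_E$ be an empirical distribution over labeled examples $(\hat x,a,y)$, let $\gamma\ge0$, and let $\{(x_j,c_j^{-1},c_j^{+1})\}_{j=1}^n$ be a cost-sensitive classification instance with real costs. Then the FairCSC problem $$\min_{\pi\in\Delta(\mathcal{H})}\ \mathbb{E}_{h\sim\pi}\Big[\sum_{j=1}^n c_j^{h(x_j)}\Big]\quad\text{subject to}\quad |\Delta_{FPR}(\pi,\mathcal{D}_E)|\le\gamma$$ has an optimal solution that is a distribution over $\mathcal{H}$ with support size at most $2$.
   Context: $\Delta(\mathcal{H})$ is the set of probability distributions over $\mathcal{H}$. For $j\in\{-1,1\}$, $FPR_j(\pi,\mathcal{D}_E)=\mathbb{E}_{h\sim\pi}[\Pr_{(x,y)\sim\mathcal{D}_E}(h(x)=+1\mid a=j,y=-1)]$ with $x=(\hat x,a)$, and $\Delta_{FPR}(\pi,\mathcal{D}_E)=FPR_1(\pi,\mathcal{D}_E)-FPR_{-1}(\pi,\mathcal{D}_E)$ (assume $\mathcal{D}_E$ contains examples with $y=-1$ in each group so these rates are defined). *)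

From mathcomp Require Import all_boot all_order all_algebra.
From mathcomp Require Import reals.
Set Implicit Arguments. Unset Strict Implicit. Unset Printing Implicit Defensive.
Import Order.TTheory GRing.Theory Num.Theory.
Local Open Scope ring_scope.

(* Labels and group attributes in {-1,1} are encoded as bool:
   true = +1, false = -1. *)

Definition hypothesis (X : Type) := X * bool -> bool.

(* A labeled example ((xhat, a), y). *)
Definition example (X : Type) := ((X * bool) * bool)%type.

Definition is_distr (R : realType) (I : finType) (pi : I -> R) : Prop :=
  (forall i, 0 <= pi i) /\ \sum_(i : I) pi i = 1.

(* Empirical distribution D_E: uniform over the sample S (with multiplicity).
   Pr_{D_E}(h(x) = +1 | a = j, y = -1). *)
Definition fp_rate (X : Type) (R : realType) (S : seq (example X))
    (h : hypothesis X) (j : bool) : R :=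
  (count (fun e : example X => [&& e.1.2 == j, ~~ e.2 & h e.1]) S)%:R /
  (count (fun e : example X => (e.1.2 == j) && ~~ e.2) S)%:R.

Definition FPR (X : Type) (R : realType) (I : finType) (hyp : I -> hypothesis X)
    (S : seq (example X)) (pi : I -> R) (j : bool) : R :=
  \sum_(i : I) pi i * fp_rate R S (hyp i) j.

Definition Delta_FPR (X : Type) (R : realType) (I : finType)
    (hyp : I -> hypothesis X) (S : seq (example X)) (pi : I -> R) : R :=
  FPR hyp S pi true - FPR hyp S pi false.

Definition csc_cost (X : Type) (R : realType) (I : finType)
    (hyp : I -> hypothesis X) (n : nat) (xs : 'I_n -> X * bool)
    (c : 'I_n -> bool -> R) (pi : I -> R) : R :=
  \sum_(i : I) pi i * \sum_(j < n) c j (hyp i (xs j)).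

Definition fair_feasible (X : Type) (R : realType) (I : finType)
    (hyp : I -> hypothesis X) (S : seq (example X)) (gamma : R) (pi : I -> R) : Prop :=
  is_distr pi /\ `|Delta_FPR hyp S pi| <= gamma.

Definition support_size (R : realType) (I : finType) (pi : I -> R) : nat :=
  #|[set i : I | pi i != 0]|.

(* Write f i for the FPR gap of hypothesis i and v i for its total cost; both
   objectives are linear in pi.  A feasible pi whose gap has mean F is, up to
   scaling, a mixture of the two-point distributions of mean F that pair each
   i with f i <= F against each j with f j > F, so its cost dominates that of
   some feasible two-point mixture.  Shifting the weight of a feasible mixture
   of i and j towards the cheaper endpoint lowers the cost and keeps it feasible
   until either that endpoint is reached or the constraint |gap| <= gamma
   becomes tight.  So the optimum is attained among finitely many candidates:
   pure hypotheses and mixtures of two hypotheses with gap exactly +gamma or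
   -gamma, and the cheapest feasible candidate has support at most two. *)

From mathcomp Require Import all_boot all_order all_algebra.
From mathcomp Require Import reals.
From mathcomp Require Import ring lra.
Set Implicit Arguments. Unset Strict Implicit. Unset Printing Implicit Defensive.
Import Order.TTheory GRing.Theory Num.Theory.
Local Open Scope ring_scope.

Section Interpolation.
Variable R : realFieldType.

Definition crossing (x y c : R) : R := (c - y) / (x - y).

Lemma crossing_above (x y c t : R) :
  0 <= t <= 1 -> t * x + (1 - t) * y <= c < x ->
  t <= crossing x y c <= 1 /\
  crossing x y c * x + (1 - crossing x y c) * y = c.
Proof.
move=> /andP[t_ge0 t_le1] /andP[mix_le c_lt].
have d_gt0 : 0 < x - y.
  rewrite ltNge; apply/negP => d_le0.
  have : (1 - t) * (x - y) <= 0 by apply: mulr_ge0_le0; lra.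
  lra.
set s := crossing x y c.
have sd : s * (x - y) = c - y by rewrite divfK ?gt_eqF.
split; first by apply/andP; split; rewrite -(ler_pM2r d_gt0) sd ?mul1r; lra.
by rewrite -[RHS](subrK y) -sd; ring.
Qed.

Lemma crossing_below (x y c t : R) :
  0 <= t <= 1 -> x < c <= t * x + (1 - t) * y ->
  t <= crossing x y c <= 1 /\
  crossing x y c * x + (1 - crossing x y c) * y = c.
Proof.
move=> t01 /andP[x_lt mix_ge].
have -> : crossing x y c = crossing (- x) (- y) (- c).
  by rewrite /crossing -[- c - - y]opprD -[- x - - y]opprD invrN mulrNN.
case: (@crossing_above (- x) (- y) (- c) t t01) => [|s01 mix_eq].
  by apply/andP; split; lra.
by split=> //; lra.
Qed.

End Interpolation.

Section PairwiseSum.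
Variables (R : realFieldType) (I : finType).

Lemma sum_ge0_of_pairwise (p a g : I -> R) :
  (forall i, 0 <= p i) -> \sum_i p i * a i = 0 ->
  (forall i, a i = 0 -> 0 <= g i) ->
  (forall i j, a i <= 0 < a j -> 0 <= a j * g i - a i * g j) ->
  0 <= \sum_i p i * g i.
Proof.
move=> p_ge0 pa0 g_ge0 pair_ge0.
pose L i := a i <= 0.
set A := \sum_(j | ~~ L j) p j * a j.
have A_ge0 : 0 <= A.
  by apply: sumr_ge0 => j; rewrite -ltNge => /ltW; apply: mulr_ge0.
have sumL : \sum_(i | L i) p i * a i = - A.
  by move: pa0; rewrite (bigID L) /= -/A; lra.
have cross : A * \sum_i p i * g i =
    \sum_(i | L i) \sum_(j | ~~ L j) p i * p j * (a j * g i - a i * g j).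
  have -> : A * \sum_i p i * g i =
      (\sum_(i | L i) p i * g i) * A -
      (\sum_(i | L i) p i * a i) * \sum_(j | ~~ L j) p j * g j.
    by rewrite sumL (bigID L) /=; ring.
  rewrite !mulr_suml -sumrB; apply: eq_bigr => i _.
  rewrite !mulr_sumr -sumrB; apply: eq_bigr => j _; ring.
have [A_gt0 | A_eq0] : 0 < A \/ A = 0.
  by move: A_ge0; rewrite le_eqVlt => /orP[/eqP <-|]; [right | left].
  rewrite -(pmulr_rge0 _ A_gt0) cross.
  apply: sumr_ge0 => i Li; apply: sumr_ge0 => j Lj.
  apply: mulr_ge0; first exact: mulr_ge0.
  by apply: pair_ge0; apply/andP; rewrite ltNge.
have pa_eq0 i : p i * a i = 0.
  have [Li | Li] := boolP (L i); last first.
    apply: (psumr_eq0P _ A_eq0 Li) => j.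
    by rewrite -ltNge => /ltW; apply: mulr_ge0.
  apply: oppr_inj; rewrite oppr0.
  apply: (psumr_eq0P (F := fun j => - (p j * a j)) _ _ Li).
    by move=> j Lj; rewrite oppr_ge0 mulr_ge0_le0.
  by rewrite sumrN sumL opprK.
apply: sumr_ge0 => i _; move/eqP: (pa_eq0 i).
rewrite mulf_eq0 => /orP[/eqP -> | /eqP /g_ge0]; first by rewrite mul0r.
exact: mulr_ge0.
Qed.

End PairwiseSum.

Section TwoPointOptimum.
Variables (R : realFieldType) (I : finType) (f v : I -> R) (gamma : R).

Definition pair_feasible (i j : I) (t : R) : bool :=
  (0 <= t <= 1) && (`|t * f i + (1 - t) * f j| <= gamma).

Definition pair_cost (i j : I) (t : R) : R := t * v i + (1 - t) * v j.

Lemma pair_feasibleC i j t : pair_feasible j i (1 - t) = pair_feasible i j t.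
Proof.
rewrite /pair_feasible subKr [_ + t * _]addrC subr_ge0 gerBl.
by rewrite [(t <= 1) && _]andbC.
Qed.

Lemma pair_costC i j t : pair_cost j i (1 - t) = pair_cost i j t.
Proof. by rewrite /pair_cost; ring. Qed.

Lemma pair_cost_le i j s t :
  v i <= v j -> t <= s -> pair_cost i j s <= pair_cost i j t.
Proof.
move=> vij ts; have : 0 <= (s - t) * (v j - v i) by apply: mulr_ge0; lra.
by rewrite /pair_cost; lra.
Qed.

(* (i, j, None) is the pure hypothesis j; (i, j, Some b) is the mixture of i
   and j whose gap is exactly gamma (b = true) or - gamma (b = false). *)
Definition vertex_weight (k : I * I * option bool) : R :=
  if k.2 is Some b
  then crossing (f k.1.1) (f k.1.2) (if b then gamma else - gamma) else 0.

Definition vertex_feasible (k : I * I * option bool) : bool :=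
  pair_feasible k.1.1 k.1.2 (vertex_weight k).

Definition vertex_cost (k : I * I * option bool) : R :=
  pair_cost k.1.1 k.1.2 (vertex_weight k).

Lemma vertex_feasible_pure i : vertex_feasible (i, i, None) = (`|f i| <= gamma).
Proof.
by rewrite /vertex_feasible /pair_feasible /= lexx ler01 mul0r subr0 mul1r add0r.
Qed.

Lemma vertex_cost_pure i : vertex_cost (i, i, None) = v i.
Proof. by rewrite /vertex_cost /pair_cost /= mul0r subr0 mul1r add0r. Qed.

Lemma pair_dominated_by_vertex i j t : pair_feasible i j t ->
  exists2 k, vertex_feasible k & vertex_cost k <= pair_cost i j t.
Proof.
wlog vij : i j t / v i <= v j.
  move=> wlog; have [|/ltW] := lerP (v i) (v j); first exact: wlog.
  by rewrite -pair_feasibleC -pair_costC; apply: wlog.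
case/andP=> t01; rewrite ler_norml => /andP[mix_lo mix_hi].
have [t_ge0 t_le1] := andP t01.
have [fi_lo | fi_ge] := ltrP (f i) (- gamma).
  have mix_cross : f i < - gamma <= t * f i + (1 - t) * f j by rewrite fi_lo mix_lo.
  have [/andP[t_le s_le1] mix_eq] := crossing_below t01 mix_cross.
  exists (i, j, Some false); last exact: pair_cost_le.
  rewrite /vertex_feasible /vertex_weight /pair_feasible /= mix_eq s_le1.
  rewrite ler_norml lexx andbT.
  by apply/andP; split; lra.
have [fi_le | fi_gt] := lerP (f i) gamma.
  exists (i, i, None); first by rewrite vertex_feasible_pure ler_norml fi_ge fi_le.
  rewrite vertex_cost_pure; apply: le_trans (pair_cost_le vij t_le1).
  by rewrite /pair_cost; lra.
have mix_cross : t * f i + (1 - t) * f j <= gamma < f i by rewrite mix_hi fi_gt.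
have [/andP[t_le s_le1] mix_eq] := crossing_above t01 mix_cross.
exists (i, j, Some true); last exact: pair_cost_le.
rewrite /vertex_feasible /vertex_weight /pair_feasible /= mix_eq s_le1.
rewrite ler_norml lexx !andbT.
by apply/andP; split; lra.
Qed.

Definition feasible (pi : I -> R) : Prop :=
  ((forall i, 0 <= pi i) /\ \sum_i pi i = 1) /\ `|\sum_i pi i * f i| <= gamma.

Section LowerBound.
Variable K : R.
Hypothesis pair_cost_ge : forall i j t, pair_feasible i j t -> K <= pair_cost i j t.

Lemma pair_exchange_ge0 (F : R) i j : `|F| <= gamma -> f i - F <= 0 < f j - F ->
  0 <= (f j - F) * (v i - K) - (f i - F) * (v j - K).
Proof.
move=> F_bound /andP[ai aj].
set D := (f j - F) - (f i - F).
have D_gt0 : 0 < D by rewrite /D; lra.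
set t := (f j - F) / D.
have tD : t * D = f j - F by rewrite divfK ?gt_eqF.
have t01 : 0 <= t <= 1.
  rewrite /t ler_pdivrMr // mul1r divr_ge0 ?(ltW D_gt0) ?(ltW aj) /D; lra.
have mix_eq : t * f i + (1 - t) * f j = F.
  have -> : t * f i + (1 - t) * f j = F + ((f j - F) - t * D) by rewrite /D; ring.
  by rewrite tD subrr addr0.
have feas : pair_feasible i j t by rewrite /pair_feasible t01 mix_eq F_bound.
have := pair_cost_ge feas; rewrite /pair_cost => cost_ge.
have : 0 <= D * (t * (v i - K) + (1 - t) * (v j - K)) by apply: mulr_ge0; lra.
have -> : D * (t * (v i - K) + (1 - t) * (v j - K)) =
    (t * D) * (v i - K) + (D - t * D) * (v j - K) by ring.
by rewrite tD /D; congr (0 <= _); ring.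
Qed.

Lemma feasible_cost_ge pi : feasible pi -> K <= \sum_i pi i * v i.
Proof.
move=> [[pi_ge0 pi_sum1] F_bound]; set F := \sum_i pi i * f i in F_bound.
have sum_sub (h : I -> R) c : \sum_i pi i * (h i - c) = \sum_i pi i * h i - c.
  by under eq_bigr do rewrite mulrBr; rewrite sumrB -mulr_suml pi_sum1 mul1r.
rewrite -subr_ge0 -sum_sub.
apply: (sum_ge0_of_pairwise (a := fun i => f i - F)) => //.
- by rewrite sum_sub subrr.
- move=> i /eqP; rewrite subr_eq0 => /eqP fiF; rewrite subr_ge0.
  have feas : pair_feasible i i 1.
    by rewrite /pair_feasible lexx ler01 subrr mul0r addr0 mul1r fiF.
  by have := pair_cost_ge feas; rewrite /pair_cost subrr mul0r addr0 mul1r.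
- by move=> i j; apply: pair_exchange_ge0.
Qed.

End LowerBound.

Definition pair_distr (i j : I) (t : R) (m : I) : R :=
  (if m == i then t else 0) + (if m == j then 1 - t else 0).

Lemma sum_pair_distr i j t (h : I -> R) :
  \sum_m pair_distr i j t m * h m = t * h i + (1 - t) * h j.
Proof.
rewrite /pair_distr; under eq_bigr do rewrite mulrDl; rewrite big_split /=.
congr (_ + _).
  by rewrite (bigD1 i) //= eqxx big1 ?addr0 // => m /negbTE ->; rewrite mul0r.
by rewrite (bigD1 j) //= eqxx big1 ?addr0 // => m /negbTE ->; rewrite mul0r.
Qed.

Lemma pair_distr_feasible i j t :
  pair_feasible i j t -> feasible (pair_distr i j t).
Proof.
case/andP=> /andP[t_ge0 t_le1] mix_bound.
split; last by rewrite sum_pair_distr.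
split=> [m | ].
  by rewrite /pair_distr addr_ge0 //; case: ifP; rewrite ?subr_ge0.
have := sum_pair_distr i j t (fun=> 1); rewrite !mulr1 subrKC => <-.
by apply: eq_bigr => m _; rewrite mulr1.
Qed.

Lemma card_support_pair_distr i j t :
  (#|[set m | pair_distr i j t m != 0%R]| <= 2)%N.
Proof.
apply: leq_trans (subset_leq_card (_ : _ \subset [set i; j])) _; last first.
  by rewrite cards2; case: (_ != _).
apply/subsetP => m; rewrite !inE /pair_distr.
by case: (m == i); case: (m == j); rewrite ?orbT // addr0 eqxx.
Qed.

Theorem two_point_optimum i0 : `|f i0| <= gamma ->
  exists pi, [/\ feasible pi,
    forall pi', feasible pi' -> \sum_i pi i * v i <= \sum_i pi' i * v i
  & (#|[set i | pi i != 0%R]| <= 2)%N].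
Proof.
rewrite -vertex_feasible_pure => vertex0.
have [[[i j] b] k_feas k_min] := arg_minP vertex_cost vertex0.
exists (pair_distr i j (vertex_weight (i, j, b))); split.
- exact: pair_distr_feasible.
- rewrite sum_pair_distr => pi'; apply: feasible_cost_ge => i' j' t.
  by case/pair_dominated_by_vertex=> k' /k_min; apply: le_trans.
- exact: card_support_pair_distr.
Qed.

End TwoPointOptimum.

Lemma fp_rate_const_false (X : Type) (R : realType) (S : seq (example X)) j :
  fp_rate R S (fun _ => false) j = 0.
Proof.
rewrite /fp_rate (eq_count (a2 := pred0)) ?count_pred0 ?mul0r // => e.
by rewrite /= !andbF.
Qed.

Lemma Delta_FPR_sum (X : Type) (R : realType) (I : finType)
    (hyp : I -> hypothesis X) (S : seq (example X)) (pi : I -> R) :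
  Delta_FPR hyp S pi =
  \sum_i pi i * (fp_rate R S (hyp i) true - fp_rate R S (hyp i) false).
Proof. by rewrite /Delta_FPR /FPR -sumrB; apply: eq_bigr => i _; rewrite mulrBr. Qed.

Theorem lemma1 (R : realType) (X : Type) (I : finType)
    (hyp : I -> hypothesis X)
    (hyp_inj : injective hyp)
    (const_pos : exists i : I, hyp i = (fun _ => true))
    (const_neg : exists i : I, hyp i = (fun _ => false))
    (S : seq (example X))
    (S_groups : forall j : bool,
        has (fun e : example X => (e.1.2 == j) && ~~ e.2) S)
    (gamma : R) (gamma_ge0 : 0 <= gamma)
    (n : nat) (xs : 'I_n -> X * bool) (c : 'I_n -> bool -> R) :
  exists pi : I -> R,
    [/\ fair_feasible hyp S gamma pi,
        (forall pi' : I -> R, fair_feasible hyp S gamma pi' ->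
           csc_cost hyp xs c pi <= csc_cost hyp xs c pi')
      & (support_size pi <= 2)%N].
Proof.
pose gap i := fp_rate R S (hyp i) true - fp_rate R S (hyp i) false.
have feasibleE pi : fair_feasible hyp S gamma pi <-> feasible gap gamma pi.
  by rewrite /fair_feasible Delta_FPR_sum.
have [i0 hyp_i0] := const_neg.
have gap_i0 : `|gap i0| <= gamma.
  by rewrite /gap hyp_i0 !fp_rate_const_false subrr normr0.
have [pi [pi_feas pi_opt pi_supp]] :=
  two_point_optimum (fun i => \sum_(j < n) c j (hyp i (xs j))) gap_i0.
exists pi; split => //; first exact/feasibleE.
by move=> pi' /feasibleE; apply: pi_opt.
Qed.
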